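(* Assume volume control with constants $\alpha,C_L,C_U$. Let $R\ge1$, let $\mathcal P$ be a covering of radius $R$ with overlap constant $b_\Gamma$, and let $\mathcal P'$ be a covering of radius $R'$ with $R'\le C_0R$ for some $C_0>0$. Let $u:A\to(0,\infty)$ be any positive function on a finite nonempty $A\subset\mathbb V$ (e.g. the landscape function). Then for every $E>0$, $$N_u^{\mathcal P,A}(E)\le(1+C_0)^\alpha C_\Gamma b_\Gamma\,N_u^{\mathcal P',A}(E),$$ where $C_\Gamma=2^\alpha C_U/C_L$.
   Context: $\Gamma=(\mathbb V,\mathcal E)$ is a connected simple unweighted graph with countably infinite vertex set, $d_0$ its shortest-path metric, $B(x,r)=\{y:d_0(x,y)\le r\}$. Volume control: $C_Lr^\alpha\le|B(x,r)|\le C_Ur^\alpha$ for all $x$, $r\ge1$, with $\alpha\ge1$. A covering of radius $R$ is a family $\mathcal P=\{B(z_i,R)\}_i$ with union $\mathbb V$; overlap constant $b$ means every point lies in at most $b$ of its balls. For finite $A$, $\mathcal P|_A=\{B\in\mathcal P:B\cap A\ne\emptyset\}$ and $N_u^{\mathcal P,A}(E)=|A|^{-1}\#\{B\in\mathcal P|_A:\min_{x\in B\cap A}1/u(x)\le E\}$. *)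

From Stdlib Require Import Reals Lra List.
Import ListNotations.
Open Scope R_scope.

Section Graph.
Context {V : Type} (adj : V -> V -> Prop).

Inductive walk : V -> V -> nat -> Prop :=
| walk0 x : walk x x 0
| walkS x y z n : adj x y -> walk y z n -> walk x z (S n).

(* B(x,r) = {y : d0(x,y) <= r}, d0 the shortest-path metric:
   d0(x,y) <= r  iff  some walk from x to y has length <= r. *)
Definition ball (x : V) (r : R) (y : V) : Prop :=
  exists n, walk x y n /\ INR n <= r.

Definition simple_graph : Prop :=
  (forall x y, adj x y -> adj y x) /\ (forall x, ~ adj x x).

Definition connected : Prop := forall x y, exists n, walk x y n.

End Graph.

Definition card_eq {T : Type} (S : T -> Prop) (n : nat) : Prop :=
  exists l : list T, NoDup l /\ (forall t, In t l <-> S t) /\ length l = n.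

Definition countably_infinite (T : Type) : Prop :=
  exists f : nat -> T, (forall m n, f m = f n -> m = n) /\ (forall t, exists n, f n = t).

Definition volume_control {V : Type} (adj : V -> V -> Prop) (alpha CL CU : R) : Prop :=
  forall (x : V) (r : R), 1 <= r ->
    exists n, card_eq (ball adj x r) n /\
      CL * Rpower r alpha <= INR n /\ INR n <= CU * Rpower r alpha.

Definition is_covering {V : Type} (adj : V -> V -> Prop)
    (P : (V -> Prop) -> Prop) (Rad : R) : Prop :=
  (forall B, P B -> exists z, forall y, B y <-> ball adj z Rad y) /\
  (forall x, exists B, P B /\ B x).

Definition overlap_const {V : Type} (P : (V -> Prop) -> Prop) (b : R) : Prop :=
  forall (x : V) (l : list (V -> Prop)), NoDup l ->
    (forall B, In B l -> P B /\ B x) -> INR (length l) <= b.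

Definition is_min {T : Type} (S : T -> Prop) (f : T -> R) (m : R) : Prop :=
  (exists x, S x /\ f x = m) /\ (forall x, S x -> m <= f x).

Definition counted_balls {V : Type} (P : (V -> Prop) -> Prop) (A : V -> Prop)
    (u : V -> R) (E : R) (B : V -> Prop) : Prop :=
  P B /\ (exists x, B x /\ A x) /\
  exists m, is_min (fun x => B x /\ A x) (fun x => / u x) m /\ m <= E.

Definition N_is {V : Type} (P : (V -> Prop) -> Prop) (A : V -> Prop)
    (u : V -> R) (E : R) (N : R) : Prop :=
  exists nA nP, card_eq A nA /\ card_eq (counted_balls P A u E) nP /\
    N = INR nP / INR nA.

(* Every counted ball B of P contains a point x of A with 1/u(x) <= E, and the
   ball of P' through x is then counted too; so the counted balls of P are
   covered by those of P' that they meet.  A ball of P meeting a fixed ball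
   B(z', R') lies in B(z', 2R + R'), has at least C_L R^alpha points, and each
   point is in at most b balls of P; double counting gives at most
   b C_U (2R + R')^alpha / (C_L R^alpha) <= (1 + C0)^alpha C_Gamma b such balls. *)
From Stdlib Require Import Reals List.
From Stdlib Require Import Lra Lia Classical ClassicalDescription.
Open Scope R_scope.

Definition holds (p : Prop) : bool :=
  if excluded_middle_informative p then true else false.

Lemma holdsP (p : Prop) : Bool.reflect p (holds p).
Proof. unfold holds; destruct (excluded_middle_informative p); constructor; auto. Qed.

Definition count_in {T} (p : T -> Prop) (l : list T) : nat :=
  length (filter (fun x => holds (p x)) l).

Lemma In_filter_holds {T} (p : T -> Prop) (l : list T) x :
  In x (filter (fun y => holds (p y)) l) <-> In x l /\ p x.
Proof.
  rewrite filter_In; destruct (holdsP (p x)); intuition congruence.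
Qed.

Lemma list_sum_count_swap {X Y} (r : X -> Y -> Prop) (l1 : list X) (l2 : list Y) :
  list_sum (map (fun x => count_in (r x) l2) l1) =
  list_sum (map (fun y => count_in (fun x => r x y) l1) l2).
Proof.
  induction l1 as [|a l1 IH]; simpl.
  - induction l2 as [|y l2 IH2]; simpl; auto.
  - rewrite IH; clear IH; unfold count_in; simpl.
    induction l2 as [|y l2 IH2]; simpl; auto.
    destruct (holds (r a y)); simpl; lia.
Qed.

Lemma list_sum_map_lower {T} (f : T -> nat) (l : list T) (c : R) :
  (forall x, In x l -> c <= INR (f x)) -> INR (length l) * c <= INR (list_sum (map f l)).
Proof.
  induction l as [|a l IH]; intros H; simpl map; simpl length; [simpl; lra|].
  rewrite S_INR; simpl list_sum; rewrite plus_INR.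
  assert (c <= INR (f a)) by (apply H; left; auto).
  assert (INR (length l) * c <= INR (list_sum (map f l))) by (apply IH; auto with datatypes).
  lra.
Qed.

Lemma list_sum_map_upper {T} (f : T -> nat) (l : list T) (c : R) :
  (forall x, In x l -> INR (f x) <= c) -> INR (list_sum (map f l)) <= INR (length l) * c.
Proof.
  induction l as [|a l IH]; intros H; simpl map; simpl length; [simpl; lra|].
  rewrite S_INR; simpl list_sum; rewrite plus_INR.
  assert (INR (f a) <= c) by (apply H; left; auto).
  assert (INR (list_sum (map f l)) <= INR (length l) * c) by (apply IH; auto with datatypes).
  lra.
Qed.

Lemma length_le_of_cover {X} (rel : X -> X -> Prop) (M : R) (l2 : list X) :
  forall l1 : list X, NoDup l1 ->
  (forall a, In a l1 -> exists c, In c l2 /\ rel a c) ->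
  (forall c, In c l2 -> forall L, NoDup L ->
     (forall a, In a L -> In a l1 /\ rel a c) -> INR (length L) <= M) ->
  INR (length l1) <= M * INR (length l2).
Proof.
  induction l2 as [|c l2 IH]; intros l1 Hnd Hcov Hfew.
  - destruct l1 as [|a l1]; simpl; [lra|].
    destruct (Hcov a) as [c [[] _]]; left; auto.
  - rewrite <- (filter_length (fun a => holds (rel a c)) l1), plus_INR.
    simpl length; rewrite S_INR.
    assert (Hin : INR (count_in (fun a => rel a c) l1) <= M).
    { apply (Hfew c (or_introl eq_refl)); [apply NoDup_filter; auto|].
      intros a Ha; apply In_filter_holds in Ha; tauto. }
    assert (Hout : INR (length (filter (fun a => negb (holds (rel a c))) l1))
                   <= M * INR (length l2)).
    { apply IH; [apply NoDup_filter; auto| |].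
      - intros a Ha; apply filter_In in Ha as [Ha Hneg].
        destruct (Hcov a Ha) as [c' [[<-|Hc'] Hr]]; [|eauto].
        destruct (holdsP (rel a c)); [discriminate|contradiction].
      - intros c' Hc' L HL HLa; apply (Hfew c' (or_intror Hc') L HL).
        intros a Ha; destruct (HLa a Ha) as [Ha1 Ha2].
        apply filter_In in Ha1; tauto. }
    unfold count_in in Hin; lra.
Qed.

Lemma exists_argmin_in_list {T} (f : T -> R) (S : T -> Prop) (l : list T) :
  (exists x, In x l /\ S x) ->
  exists m, In m l /\ S m /\ forall y, In y l -> S y -> f m <= f y.
Proof.
  induction l as [|a l IH]; intros [x [Hx HSx]]; [destruct Hx|].
  destruct (classic (exists y, In y l /\ S y)) as [Hl|Hl].
  - destruct (IH Hl) as [m [Hm [HSm Hmin]]].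
    destruct (classic (S a /\ f a <= f m)) as [[HSa Ham]|Ha].
    + exists a; split; [left; auto|split; auto].
      intros y [<-|Hy] HSy; [lra|]; specialize (Hmin y Hy HSy); lra.
    + exists m; split; [right; auto|split; auto].
      intros y [<-|Hy] HSy; [|auto].
      destruct (Rle_dec (f m) (f a)); auto; exfalso; apply Ha; split; auto; lra.
  - destruct Hx as [<-|Hx]; [|exfalso; eauto].
    exists a; split; [left; auto|split; auto].
    intros y [<-|Hy] HSy; [lra|exfalso; eauto].
Qed.

Lemma exists_is_min {T} (S : T -> Prop) (f : T -> R) (l : list T) :
  (forall x, S x -> In x l) -> (exists x, S x) -> exists m, is_min S f m.
Proof.
  intros Hl [x Hx].
  destruct (exists_argmin_in_list f S l) as [m [_ [HSm Hmin]]]; [eauto|].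
  exists (f m); split; eauto.
Qed.

Lemma card_eq_unique {T} (S : T -> Prop) n m : card_eq S n -> card_eq S m -> n = m.
Proof.
  intros [l1 [H1 [I1 <-]]] [l2 [H2 [I2 <-]]].
  apply Nat.le_antisymm; apply NoDup_incl_length; auto; intros t Ht.
  - apply I2, I1, Ht.
  - apply I1, I2, Ht.
Qed.

Lemma Rpower_gt0 x y : 0 < Rpower x y.
Proof. apply exp_pos. Qed.

Lemma Rpower_sum_radii_le (alpha C0 Rad Rad' : R) :
  0 <= alpha -> 1 <= Rad -> 0 <= Rad' -> Rad' <= C0 * Rad ->
  Rpower (2 * Rad + Rad') alpha
  <= Rpower 2 alpha * Rpower (1 + C0) alpha * Rpower Rad alpha.
Proof.
  intros Halpha HR HR'0 HR'.
  assert (HC0 : 0 < 1 + C0) by nra.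
  rewrite !Rpower_mult_distr by lra.
  apply Rle_Rpower_l; [lra|split; nra].
Qed.

Section Walks.
Context {V : Type} (adj : V -> V -> Prop).

Lemma walk_app x y z n m : walk adj x y n -> walk adj y z m -> walk adj x z (n + m).
Proof. induction 1; intros; simpl; auto; econstructor; eauto. Qed.

Lemma walk_rev (adj_sym : forall x y, adj x y -> adj y x) x y n :
  walk adj x y n -> walk adj y x n.
Proof.
  induction 1; [constructor|].
  replace (S n) with (n + 1)%nat by lia.
  eapply walk_app; eauto; econstructor; [apply adj_sym; eauto|constructor].
Qed.

Lemma ball_trans x y z r s : ball adj x r y -> ball adj y s z -> ball adj x (r + s) z.
Proof.
  intros [n [Hn Hr]] [m [Hm Hs]]; exists (n + m)%nat; split.
  - eapply walk_app; eauto.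
  - rewrite plus_INR; lra.
Qed.

Lemma ball_sym (adj_sym : forall x y, adj x y -> adj y x) x y r :
  ball adj x r y -> ball adj y r x.
Proof. intros [n [Hn Hr]]; exists n; split; auto; apply walk_rev; auto. Qed.

Lemma ball_le x y r s : ball adj x r y -> r <= s -> ball adj x s y.
Proof. intros [n [Hn Hr]] H; exists n; split; auto; lra. Qed.

Lemma covering_radius_ge0 P Rad : is_covering adj P Rad -> V -> 0 <= Rad.
Proof.
  intros [Hballs Hcov] x.
  destruct (Hcov x) as [B [PB Bx]]; destruct (Hballs B PB) as [z Hz].
  destruct (proj1 (Hz x) Bx) as [n [_ Hn]]; pose proof (pos_INR n); lra.
Qed.

End Walks.

Lemma overlap_const_ge0 {V} (P : (V -> Prop) -> Prop) b : overlap_const P b -> V -> 0 <= b.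
Proof. intros Hb x; apply (Hb x nil); [constructor|intros B []]. Qed.

Lemma counted_balls_intro {V} (P : (V -> Prop) -> Prop) (A : V -> Prop) u E B x
    (lA : list V) :
  (forall y, A y -> In y lA) -> P B -> B x -> A x -> / u x <= E ->
  counted_balls P A u E B.
Proof.
  intros HlA PB Bx Ax Hx.
  destruct (exists_is_min (fun y => B y /\ A y) (fun y => / u y) lA) as [m Hm];
    [intros y [_ Ay]; auto|eauto|].
  split; [auto|split; [eauto|exists m; split; auto]].
  pose proof (proj2 Hm x (conj Bx Ax)); lra.
Qed.

Lemma counted_ball_meets_counted {V} (adj : V -> V -> Prop) P P' Rad' A u E B
    (lA : list V) :
  (forall y, A y -> In y lA) -> is_covering adj P' Rad' ->
  counted_balls P A u E B ->
  exists B', counted_balls P' A u E B' /\ exists x, B x /\ B' x.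
Proof.
  intros HlA HP' [_ [_ [m [[[x [[Bx Ax] <-]] _] Hm]]]].
  destruct (proj2 HP' x) as [B' [PB' B'x]].
  exists B'; split; [eapply counted_balls_intro; eauto|eauto].
Qed.

Section CoveringComparison.
Variables (V : Type) (adj : V -> V -> Prop).
Hypothesis adj_sym : forall x y, adj x y -> adj y x.
Variables (alpha CL CU : R).
Hypothesis HCL : 0 < CL.
Hypothesis Hvol : volume_control adj alpha CL CU.
Variables (Rad b : R) (P : (V -> Prop) -> Prop).
Hypotheses (HR : 1 <= Rad) (HP : is_covering adj P Rad) (Hb : overlap_const P b).

Lemma card_balls_meeting_ball (z' : V) (Rad' : R) (L : list (V -> Prop)) :
  0 <= Rad' -> NoDup L ->
  (forall B, In B L -> P B /\ exists x, B x /\ ball adj z' Rad' x) ->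
  INR (length L) <= b * CU * Rpower (2 * Rad + Rad') alpha / (CL * Rpower Rad alpha).
Proof.
  intros HR'0 HndL HL.
  pose proof (overlap_const_ge0 P b Hb z') as Hb0.
  pose proof (Rpower_gt0 Rad alpha) as HRa.
  destruct (Hvol z' (2 * Rad + Rad')) as [nb [[lB [HndB [HinB <-]]] [_ Hnb]]]; [lra|].
  set (S := list_sum (map (fun B => count_in B lB) L)).
  (* each ball of L has at least C_L R^alpha points, all inside B(z', 2R + R') *)
  assert (Hlow : INR (length L) * (CL * Rpower Rad alpha) <= INR S).
  { apply list_sum_map_lower; intros B HB.
    destruct (HL B HB) as [PB [x [Bx Hx]]].
    destruct (proj1 HP B PB) as [z Hz].
    destruct (Hvol z Rad HR) as [nz [[lz [Hndz [Hinz <-]]] [Hnz _]]].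
    apply Rle_trans with (1 := Hnz), le_INR, NoDup_incl_length; auto.
    intros y Hy; apply Hinz in Hy; apply In_filter_holds; split; [|apply Hz; auto].
    apply HinB, ball_le with (Rad' + Rad + Rad); [|lra].
    apply ball_trans with z; [apply ball_trans with x|auto].
    - exact Hx.
    - apply ball_sym, Hz; auto. }
  assert (Hup : INR S <= INR (length lB) * b).
  { unfold S; rewrite list_sum_count_swap; apply list_sum_map_upper; intros y _.
    apply (Hb y); [apply NoDup_filter; auto|].
    intros B HB; apply In_filter_holds in HB as [HBL By].
    split; [apply (HL B HBL)|auto]. }
  apply Rmult_le_reg_r with (CL * Rpower Rad alpha); [nra|].
  unfold Rdiv; rewrite Rmult_assoc, Rinv_l by nra.
  nra.
Qed.

Variables (Rad' : R) (P' : (V -> Prop) -> Prop).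
Hypotheses (HP' : is_covering adj P' Rad') (HR'0 : 0 <= Rad').

Lemma card_counted_balls_le (A : V -> Prop) (lA : list V) u E nP nP' :
  (forall y, A y -> In y lA) ->
  card_eq (counted_balls P A u E) nP -> card_eq (counted_balls P' A u E) nP' ->
  INR nP <= b * CU * Rpower (2 * Rad + Rad') alpha / (CL * Rpower Rad alpha) * INR nP'.
Proof.
  intros HlA [lP [HndP [HinP <-]]] [lP' [HndP' [HinP' <-]]].
  apply (length_le_of_cover (fun B B' => exists x, B x /\ B' x)); auto.
  - intros B HB; apply HinP in HB.
    destruct (counted_ball_meets_counted adj P P' Rad' A u E B lA) as [B' [HB' Hmeet]];
      auto.
    exists B'; split; [apply HinP'|]; auto.
  - intros B' HB' L HndL HL.
    apply HinP' in HB' as [PB' _].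
    destruct (proj1 HP' B' PB') as [z' Hz'].
    apply (card_balls_meeting_ball z'); auto.
    intros B HB; destruct (HL B HB) as [HBP [x [Bx B'x]]].
    apply HinP in HBP as [PB _]; split; [auto|exists x; split; auto; apply Hz'; auto].
Qed.

End CoveringComparison.

Theorem lemma2p3 (V : Type) (adj : V -> V -> Prop)
  (alpha CL CU : R)
  (Hinf : countably_infinite V) (Hsimple : simple_graph adj) (Hconn : connected adj)
  (Halpha : 1 <= alpha) (HCL : 0 < CL) (HCU : 0 < CU)
  (Hvol : volume_control adj alpha CL CU)
  (Rad Rad' C0 b : R) (P P' : (V -> Prop) -> Prop)
  (HR : 1 <= Rad) (HP : is_covering adj P Rad) (Hb : overlap_const P b)
  (HC0 : 0 < C0) (HP' : is_covering adj P' Rad') (HR' : Rad' <= C0 * Rad)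
  (A : V -> Prop) (nA : nat) (HA : card_eq A nA) (HAne : (0 < nA)%nat)
  (u : V -> R) (Hu : forall x, A x -> 0 < u x)
  (E : R) (HE : 0 < E) (N N' : R)
  (HN : N_is P A u E N) (HN' : N_is P' A u E N') :
  N <= Rpower (1 + C0) alpha * (Rpower 2 alpha * CU / CL) * b * N'.
Proof.
  destruct HN as [nA1 [nP [HA1 [HcP ->]]]], HN' as [nA2 [nP' [HA2 [HcP' ->]]]].
  rewrite <- (card_eq_unique _ _ _ HA HA1), <- (card_eq_unique _ _ _ HA HA2).
  destruct HA as [lA [_ [HinA HlenA]]].
  destruct lA as [|x0 lA]; [simpl in HlenA; lia|].
  pose proof (overlap_const_ge0 P b Hb x0) as Hb0.
  pose proof (covering_radius_ge0 adj P' Rad' HP' x0) as HR'0.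
  pose proof (card_counted_balls_le _ _ (proj1 Hsimple) _ _ _ HCL Hvol _ _ _ HR HP Hb
                _ _ HP' HR'0 A (x0 :: lA) u E nP nP' (fun y => proj2 (HinA y)) HcP HcP')
    as Hcount.
  pose proof (Rpower_sum_radii_le alpha C0 Rad Rad' ltac:(lra) HR HR'0 HR') as Hpow.
  pose proof (Rpower_gt0 Rad alpha) as HRa.
  assert (HnA : 0 < INR nA) by (apply lt_0_INR; lia).
  assert (HM : b * CU * Rpower (2 * Rad + Rad') alpha / (CL * Rpower Rad alpha)
               <= Rpower (1 + C0) alpha * (Rpower 2 alpha * CU / CL) * b).
  { apply Rmult_le_reg_r with (CL * Rpower Rad alpha); [nra|].
    field_simplify; [|lra|lra].
    assert (0 <= b * CU) by nra.
    nra. }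
  rewrite Rmult_div_assoc; unfold Rdiv.
  apply Rmult_le_compat_r; [left; apply Rinv_0_lt_compat; auto|].
  apply Rle_trans with (1 := Hcount), Rmult_le_compat_r; [apply pos_INR|exact HM].
Qed.
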